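(* Let $\mathcal T$ be an orbital category and $\mathcal C$ a $\mathcal T$-weak indexing system. Then each of $c(\mathcal C)=\{V\in\mathcal T\mid *_V\in\mathcal C_V\}$, $\upsilon(\mathcal C)=\{V\in\mathcal T\mid\emptyset_V\in\mathcal C_V\}$, $\nabla(\mathcal C)=\{V\in\mathcal T\mid 2\cdot *_V\in\mathcal C_V\}$ is a $\mathcal T$-family.
   Context: For a small category $\mathcal T$, $\mathbb F_{\mathcal T}$ is the full subcategory of $\mathrm{Fun}(\mathcal T^{op},\mathrm{Set})$ on finite coproducts of representables; $\mathcal T$ is orbital if $\mathbb F_{\mathcal T}$ has pullbacks. $\mathbb F_V:=\mathbb F_{\mathcal T,/V}$, $*_V$ terminal, $\emptyset_V$ initial, $n\cdot S$ the $n$-fold coproduct; for $f:U\to V$ in $\mathcal T$, $\mathrm{Res}^V_U$ is pullback along $f$, $\mathrm{Ind}^V_U$ postcomposition. A full $\mathcal T$-subcategory $\mathcal C\subseteq\underline{\mathbb F}_{\mathcal T}$ is a choice of isomorphism-closed classes $\mathcal C_V\subseteq\mathrm{Ob}\,\mathbb F_V$ stable under all restrictions. For $S\in\mathbb F_V$ with orbits $U\in\mathrm{Orb}(S)$ (each with a map $U\to V$) and $T_U\in\mathbb F_U$, $\coprod_U^ST_U:=\coprod_U\mathrm{Ind}_U^VT_U$. A $\mathcal T$-weak indexing system is a full $\mathcal T$-subcategory $\mathcal C$ with: $\mathcal C_V\neq\emptyset\Rightarrow *_V\in\mathcal C_V$, and $S\in\mathcal C_V$, $T_U\in\mathcal C_U$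 for all $U$ imply $\coprod^S_UT_U\in\mathcal C_V$. A $\mathcal T$-family is a full subcategory $\mathcal F\subseteq\mathcal T$ such that for every morphism $V\to W$ with $W\in\mathcal F$ we have $V\in\mathcal F$. *)

From mathcomp Require Import all_boot.
Set Implicit Arguments. Unset Strict Implicit. Unset Printing Implicit Defensive.

Record Cat := {
  Ob : Type;
  Hom : Ob -> Ob -> Type;
  idm : forall A, Hom A A;
  cmp : forall A B C, Hom B C -> Hom A B -> Hom A C;
  cmp_id_l : forall A B (f : Hom A B), cmp (idm B) f = f;
  cmp_id_r : forall A B (f : Hom A B), cmp f (idm A) = f;
  cmp_assoc : forall A B C D (h : Hom C D) (g : Hom B C) (f : Hom A B),
      cmp h (cmp g f) = cmp (cmp h g) f
}.
Arguments idm {c} A.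
Arguments cmp {c A B C}.

Section FT.
Variable T : Cat.

(** An object  coprod_{i in idx} y(obj i)  (idx a finite type).  By Yoneda and
    the universal property of coproducts, a map
    coprod_i y(U_i) -> coprod_j y(W_j) in Fun(T^op,Set) is exactly a family
    choosing, for each i, a summand j and a morphism U_i -> W_j. *)
Record FinT := { idx : finType; obj : idx -> Ob T }.
Arguments obj : clear implicits.

Definition FMor (S S' : FinT) : Type :=
  forall i : idx S, { j : idx S' & Hom (obj S i) (obj S' j) }.

Definition fid (S : FinT) : FMor S S := fun i => existT _ i (idm (obj S i)).
Arguments fid : clear implicits.

Definition fcomp (A B C : FinT) (g : FMor B C) (f : FMor A B) : FMor A C :=
  fun i => existT _ (projT1 (g (projT1 (f i))))
                    (cmp (projT2 (g (projT1 (f i)))) (projT2 (f i))).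

Definition yon (V : Ob T) : FinT := {| idx := unit; obj := fun _ => V |}.
Definition yonF (U V : Ob T) (f : Hom U V) : FMor (yon U) (yon V) :=
  fun _ => existT _ tt f.

Definition is_pullback (A B C P : FinT) (g : FMor A C) (h : FMor B C)
    (p1 : FMor P A) (p2 : FMor P B) : Prop :=
  fcomp g p1 = fcomp h p2 /\
  forall (Q : FinT) (q1 : FMor Q A) (q2 : FMor Q B),
    fcomp g q1 = fcomp h q2 ->
    exists! u : FMor Q P, fcomp p1 u = q1 /\ fcomp p2 u = q2.

Definition orbital : Prop :=
  forall (A B C : FinT) (g : FMor A C) (h : FMor B C),
    exists (P : FinT) (p1 : FMor P A) (p2 : FMor P B), is_pullback g h p1 p2.

Record SliceObj (V : Ob T) := { sobj : FinT; sstr : FMor sobj (yon V) }.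
Arguments sobj {V}.
Arguments sstr {V}.

Definition slice_iso (V : Ob T) (S S' : SliceObj V) : Prop :=
  exists (u : FMor (sobj S) (sobj S')) (v : FMor (sobj S') (sobj S)),
    fcomp v u = fid (sobj S) /\ fcomp u v = fid (sobj S') /\
    fcomp (sstr S') u = sstr S.

(** R is (a choice of) Res^V_U S along f : U -> V (pullback of S -> y(V)
    along y(f)), with its projection R -> y(U). *)
Definition is_restriction (U V : Ob T) (f : Hom U V) (S : SliceObj V)
    (R : SliceObj U) : Prop :=
  exists p1 : FMor (sobj R) (sobj S), is_pullback (sstr S) (yonF f) p1 (sstr R).

Definition starV (V : Ob T) : SliceObj V :=
  {| sobj := yon V; sstr := fid (yon V) |}.

Definition emptyFinT : FinT := {| idx := void; obj := fun x => of_void _ x |}.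
Definition emptyV (V : Ob T) : SliceObj V :=
  {| sobj := emptyFinT; sstr := fun x => of_void _ x |}.

Definition twoFinT (V : Ob T) : FinT := {| idx := bool; obj := fun _ => V |}.
Definition twoStarV (V : Ob T) : SliceObj V :=
  {| sobj := twoFinT V; sstr := fun _ => existT _ tt (idm V) |}.

Definition full_T_subcat (C : forall V : Ob T, SliceObj V -> Prop) : Prop :=
  (forall V (S S' : SliceObj V), slice_iso S S' -> C V S -> C V S') /\
  (forall U V (f : Hom U V) (S : SliceObj V) (R : SliceObj U),
      is_restriction f S R -> C V S -> C U R).

(** Orbits of S in F_V are the summands i : idx (sobj S), i.e. y(obj i) with
    structure map obj i -> V.  Given T_i in F_{obj i}, the coproduct
    coprod^S_i T_i := coprod_i Ind^V_{obj i} T_i. *)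
Definition indexed_coprod (V : Ob T) (S : SliceObj V)
    (TU : forall i : idx (sobj S), SliceObj (obj (sobj S) i)) : SliceObj V :=
  {| sobj := {| idx := {i : idx (sobj S) & idx (sobj (TU i))};
                obj := fun ik => obj (sobj (TU (projT1 ik))) (projT2 ik) |};
     sstr := fun ik =>
       existT _ tt (cmp (projT2 (sstr S (projT1 ik)))
                        (projT2 (sstr (TU (projT1 ik)) (projT2 ik)))) |}.

Definition weak_indexing_system (C : forall V : Ob T, SliceObj V -> Prop) : Prop :=
  full_T_subcat C /\
  (forall V, (exists S, C V S) -> C V (starV V)) /\
  (forall V (S : SliceObj V) (TU : forall i : idx (sobj S), SliceObj (obj (sobj S) i)),
      C V S -> (forall i, C _ (TU i)) -> C V (indexed_coprod TU)).

Definition T_family (F : Ob T -> Prop) : Prop :=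
  forall (V W : Ob T) (f : Hom V W), F W -> F V.

End FT.

Arguments fid {T}.
Arguments starV {T}.
Arguments emptyV {T}.
Arguments twoStarV {T}.

From mathcomp Require Import all_boot.
From Stdlib Require Import FunctionalExtensionality.

(* Only the stability of C under restriction is needed: each of *_V, the empty
   object and 2.*_V restricts along any f : U -> V to the corresponding object
   over U, so if it lies in C_V it lies in C_U. *)

Section Restrictions.
Variable T : Cat.

Lemma fcomp_fid_l (A B : FinT T) (g : FMor A B) : fcomp (fid B) g = g.
Proof.
apply: functional_extensionality_dep => i; rewrite /fcomp /=.
by case: (g i) => j h /=; rewrite cmp_id_l.
Qed.

Lemma fcomp_fid_r (A B : FinT T) (g : FMor A B) : fcomp g (fid A) = g.
Proof.
apply: functional_extensionality_dep => i; rewrite /fcomp /=.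
by case: (g i) => j h /=; rewrite cmp_id_r.
Qed.

Lemma FMor_yon_eq (Q : FinT T) (W : Ob T) (q q' : FMor Q (yon W)) :
  (forall i, projT2 (q i) = projT2 (q' i)) -> q = q'.
Proof.
move=> Eq; apply: functional_extensionality_dep => i; move: (Eq i).
by case: (q i) => -[] h; case: (q' i) => -[] h' /= ->.
Qed.

Lemma is_pullback_fid (B C : FinT T) (h : FMor B C) :
  is_pullback (fid C) h h (fid B).
Proof.
split; first by rewrite fcomp_fid_l fcomp_fid_r.
move=> Q q1 q2 Eq; exists q2; split.
- by rewrite fcomp_fid_l -Eq fcomp_fid_l.
- by move=> u [_ <-]; rewrite fcomp_fid_l.
Qed.

Definition restriction_stable (X : forall V : Ob T, SliceObj V) : Prop :=
  forall U V (f : Hom U V), is_restriction f (X V) (X U).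

Lemma restriction_stable_starV : restriction_stable starV.
Proof. by move=> U V f; exists (yonF f); apply: is_pullback_fid. Qed.

Lemma restriction_stable_emptyV : restriction_stable emptyV.
Proof.
move=> U V f; exists (fun x => of_void _ x); split.
  by apply: functional_extensionality_dep => -[].
move=> Q q1 q2 _.
have noQ (i : idx Q) : False by case: (projT1 (q1 i)).
exists (fun i => match noQ i with end); split.
- by split; apply: functional_extensionality_dep => i; case: (noQ i).
- by move=> u _; apply: functional_extensionality_dep => i; case: (noQ i).
Qed.

(* The paper's [n . *_V] with [n] replaced by a finite type [I];
   [twoStarV V] is convertible to [copiesV bool V]. *)
Definition copiesV (I : finType) (V : Ob T) : SliceObj V :=
  {| sobj := {| idx := I; obj := fun _ => V |};
     sstr := fun _ => existT _ tt (idm V) |}.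

Lemma restriction_stable_copiesV (I : finType) :
  restriction_stable (copiesV I).
Proof.
move=> U V f; exists (fun i => existT (fun _ : I => Hom U V) i f); split.
  by apply: FMor_yon_eq => i /=; rewrite cmp_id_l cmp_id_r.
move=> Q q1 q2 Eq.
have Eq_i i : projT2 (q1 i) = cmp f (projT2 (q2 i)).
  by rewrite -[projT2 (q1 i)]cmp_id_l; move/(f_equal (fun q : FMor Q (yon V) => projT2 (q i) : Hom (@obj T Q i) V)): Eq.
exists (fun i => existT (fun _ : I => Hom (@obj T Q i) U) (projT1 (q1 i)) (projT2 (q2 i))).
split.
- split; last by apply: FMor_yon_eq => i /=; rewrite cmp_id_l.
  apply: functional_extensionality_dep => i; rewrite /fcomp /= -Eq_i.
  by case: (q1 i).
- move=> u [E1 E2]; apply: functional_extensionality_dep => i.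
  have {E1}<- := f_equal (fun q => projT1 (q i)) E1.
  have {E2}<- := f_equal (fun q => projT2 (q i) : Hom (@obj T Q i) U) E2.
  by rewrite /fcomp /= cmp_id_l; case: (u i).
Qed.

Lemma full_T_subcat_family (C : forall V : Ob T, SliceObj V -> Prop)
    (X : forall V : Ob T, SliceObj V) :
  full_T_subcat C -> restriction_stable X -> T_family (fun V => C V (X V)).
Proof. by move=> [_ resC] resX U V f; apply: resC (resX U V f). Qed.

End Restrictions.

Theorem mainTheorem5 (T : Cat) (Horb : orbital T)
    (C : forall V : Ob T, SliceObj V -> Prop)
    (HC : weak_indexing_system C) :
  T_family (fun V => C V (starV V)) /\
  T_family (fun V => C V (emptyV V)) /\
  T_family (fun V => C V (twoStarV V)).
Proof.
have [subC _] := HC.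
split; [|split]; apply: full_T_subcat_family subC _.
- exact: restriction_stable_starV.
- exact: restriction_stable_emptyV.
- exact: restriction_stable_copiesV.
Qed.
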